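(* Let $(\Re,\oplus,\circ)$ be a commutative Krasner hyperring with identity $1\neq0$, let $\phi$ be a hyperideal reduction and $\delta$ a hyperideal expansion on $L(\Re)$, and let $N$ be a proper hyperideal of $\Re$. Then the following are equivalent: (i) $N$ is a $\phi$-$\delta$-primary hyperideal; (ii) for each $a\in\Re-\delta(N)$, $(N:a)=N\cup(\phi(N):a)$; (iii) for each $a\in\Re-\delta(N)$, $(N:a)=N$ or $(N:a)=(\phi(N):a)$; (iv) for all hyperideals $K,L$ of $\Re$, $K\circ L\subseteq N$ and $K\circ L\not\subseteq\phi(N)$ imply $K\subseteq N$ or $L\subseteq\delta(N)$; (v) for each hyperideal $M$ of $\Re$ with $M\not\subseteq\delta(N)$, $(N:M)=N$ or $(N:M)=(\phi(N):M)$.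
   Context: A commutative Krasner hyperring with identity is $(\Re,\oplus,\circ)$ where $(\Re,\oplus)$ is a canonical hypergroup (associative commutative hyperoperation, scalar zero $0$ with $a\oplus0=\{a\}$, unique inverses $-a$ with $0\in a\oplus(-a)$, and $c\in a\oplus b\Rightarrow b\in c\oplus(-a),\ a\in c\oplus(-b)$), $(\Re,\circ)$ is a commutative semigroup with identity $1\ne0$ and $a\circ0=0$, and $\circ$ distributes over $\oplus$. Hyperideals: nonempty $N$ with $a\oplus(-b)\subseteq N$, $r\circ a\in N$ for $a,b\in N$, $r\in\Re$; $L(\Re)$ is the set of hyperideals. A hyperideal reduction is a map $\phi:L(\Re)\to L(\Re)\cup\{\emptyset\}$ with $\phi(N)\subseteq N$ and $N\subseteq M\Rightarrow\phi(N)\subseteq\phi(M)$. A hyperideal expansion is a map $\delta:L(\Re)\to L(\Re)$ with $N\subseteq\delta(N)$ and $N\subseteq M\Rightarrow\delta(N)\subseteq\delta(M)$. For $I\in L(\Re)\cup\{\emptyset\}$, $a\in\Re$ and a hyperideal $M$: $(I:a)=\{x: x\circ a\in I\}$, $(I:M)=\{x: x\circ m\in I\ \forall m\in M\}$. $K\circ L$ is the hyperideal generated by $\{k\circ l\}$. A proper hyperideal $N$ is $\phi$-$\delta$-primary if for all $a,b\in\Re$, $a\circ b\in N$ and $a\circ b\notin\phi(N)$ imply $a\in N$ or $b\in\delta(N)$. *)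

(* A commutative Krasner hyperring with identity.
   [hadd a b c] means c ∈ a ⊕ b. *)
Record KHyperring := {
  carrier :> Type;
  hadd : carrier -> carrier -> carrier -> Prop;
  hmul : carrier -> carrier -> carrier;
  hzero : carrier;
  hone : carrier;
  hneg : carrier -> carrier;
  hadd_nonempty : forall a b, exists c, hadd a b c;
  hadd_assoc : forall a b c x,
    (exists y, hadd a b y /\ hadd y c x) <-> (exists y, hadd b c y /\ hadd a y x);
  hadd_comm : forall a b x, hadd a b x <-> hadd b a x;
  hadd_zero : forall a x, hadd a hzero x <-> x = a;
  hadd_neg : forall a, hadd a (hneg a) hzero;
  hadd_neg_unique : forall a b, hadd a b hzero -> b = hneg a;
  hadd_rev : forall a b c, hadd a b c -> hadd c (hneg a) b /\ hadd c (hneg b) a;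
  hmul_assoc : forall a b c, hmul a (hmul b c) = hmul (hmul a b) c;
  hmul_comm : forall a b, hmul a b = hmul b a;
  hmul_one : forall a, hmul hone a = a;
  hone_neq_zero : hone <> hzero;
  hmul_zero : forall a, hmul a hzero = hzero;
  hmul_distr : forall a b c x,
    (exists y, hadd b c y /\ x = hmul a y) <-> hadd (hmul a b) (hmul a c) x
}.

Arguments hadd {_}.
Arguments hmul {_}.
Arguments hzero {_}.
Arguments hone {_}.
Arguments hneg {_}.

Section Hyperideals.
Variable R : KHyperring.

Definition hset := R -> Prop.

Definition hsubset (A B : hset) : Prop := forall x, A x -> B x.
Definition hseteq (A B : hset) : Prop := forall x, A x <-> B x.
Definition hempty (A : hset) : Prop := forall x, ~ A x.

Definition hyperideal (N : hset) : Prop :=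
  (exists x, N x) /\
  (forall a b x, N a -> N b -> hadd a (hneg b) x -> N x) /\
  (forall r a, N a -> N (hmul r a)).

Definition proper (N : hset) : Prop := exists x, ~ N x.

Definition hreduction (phi : hset -> hset) : Prop :=
  (forall N, hyperideal N -> hyperideal (phi N) \/ hempty (phi N)) /\
  (forall N, hyperideal N -> hsubset (phi N) N) /\
  (forall N M, hyperideal N -> hyperideal M -> hsubset N M ->
     hsubset (phi N) (phi M)).

Definition hexpansion (delta : hset -> hset) : Prop :=
  (forall N, hyperideal N -> hyperideal (delta N)) /\
  (forall N, hyperideal N -> hsubset N (delta N)) /\
  (forall N M, hyperideal N -> hyperideal M -> hsubset N M ->
     hsubset (delta N) (delta M)).

Definition hcolon (I : hset) (a : R) : hset := fun x => I (hmul x a).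
Definition hcolonI (I M : hset) : hset :=
  fun x => forall m, M m -> I (hmul x m).

Definition hprod (K L : hset) : hset :=
  fun x => forall I, hyperideal I ->
    (forall k l, K k -> L l -> I (hmul k l)) -> I x.

Definition phi_delta_primary (phi delta : hset -> hset) (N : hset) : Prop :=
  hyperideal N /\ proper N /\
  forall a b, N (hmul a b) -> ~ phi N (hmul a b) -> N a \/ delta N b.

End Hyperideals.

Arguments hsubset {R}.
Arguments hseteq {R}.
Arguments hempty {R}.
Arguments hyperideal {R}.
Arguments proper {R}.
Arguments hreduction {R}.
Arguments hexpansion {R}.
Arguments hcolon {R}.
Arguments hcolonI {R}.
Arguments hprod {R}.
Arguments phi_delta_primary {R}.

(* The key fact: if N is phi-delta-primary, K o L <= N, K is not inside N and L is not
   inside delta(N), then every k l with k in K, l in L lies in phi(N).  Fix k0 in K \ N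
   and l0 in L \ delta(N).  For l outside delta(N) and k outside N this is the defining
   property; for k in N, any z in k + k0 lies in K \ N and k l lies in z l - k0 l.  For
   l in delta(N), shifting by l0 in the second factor reduces to the previous case.
   Taking K = (N : M), L = M gives (v); the element versions are the case M = R a. *)

From Stdlib Require Import Classical.

Lemma not_hsubset_ex (R : KHyperring) (A B : hset R) :
  ~ hsubset A B -> exists x, A x /\ ~ B x.
Proof.
  intro HAB. apply NNPP. intro Hno. apply HAB. intros x Ax.
  apply NNPP. intro Bx. apply Hno. exists x. auto.
Qed.

Section HyperringFacts.
Variable R : KHyperring.

Lemma hneg_hneg (x : R) : hneg (hneg x) = x.
Proof. symmetry. apply hadd_neg_unique, hadd_comm, hadd_neg. Qed.

Lemma hmul_hneg (a b : R) : hmul a (hneg b) = hneg (hmul a b).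
Proof.
  apply hadd_neg_unique, (proj1 (hmul_distr R a b (hneg b) hzero)).
  exists hzero. split; [apply hadd_neg | symmetry; apply hmul_zero].
Qed.

Lemma hadd_hmull (c x y z : R) : hadd x y z -> hadd (hmul c x) (hmul c y) (hmul c z).
Proof. intro Hz. apply (proj1 (hmul_distr R c x y _)). exists z. auto. Qed.

Lemma hadd_hmulr (c x y z : R) : hadd x y z -> hadd (hmul x c) (hmul y c) (hmul z c).
Proof. rewrite !(hmul_comm R _ c). apply hadd_hmull. Qed.

Lemma hmulCA (a b c : R) : hmul a (hmul b c) = hmul b (hmul a c).
Proof. rewrite !hmul_assoc, (hmul_comm R a b). reflexivity. Qed.

Section HyperidealClosure.
Variable I : hset R.
Hypothesis HI : hyperideal I.

Lemma hyperideal_hsub (a b x : R) : I a -> I b -> hadd a (hneg b) x -> I x.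
Proof. apply (proj1 (proj2 HI)). Qed.

Lemma hyperideal_hmull (r a : R) : I a -> I (hmul r a).
Proof. apply (proj2 (proj2 HI)). Qed.

Lemma hyperideal_hmulr (a r : R) : I a -> I (hmul a r).
Proof. rewrite hmul_comm. apply hyperideal_hmull. Qed.

Lemma hyperideal_hzero : I hzero.
Proof.
  destruct (proj1 HI) as [x Ix].
  rewrite <- (hmul_zero R x). apply hyperideal_hmulr, Ix.
Qed.

Lemma hyperideal_hneg (x : R) : I x -> I (hneg x).
Proof.
  intro Ix. apply (hyperideal_hsub hzero x); [apply hyperideal_hzero | exact Ix |].
  apply hadd_comm, hadd_zero. reflexivity.
Qed.

Lemma hyperideal_hadd (x y z : R) : I x -> I y -> hadd x y z -> I z.
Proof.
  intros Ix Iy Hz. apply (hyperideal_hsub x (hneg y)); [exact Ix | apply hyperideal_hneg, Iy |].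
  rewrite hneg_hneg. exact Hz.
Qed.

Lemma hyperideal_hadd_notin (x x0 z : R) : I x -> ~ I x0 -> hadd x x0 z -> ~ I z.
Proof.
  intros Ix Ix0 Hz Iz. apply Ix0.
  exact (hyperideal_hsub z x x0 Iz Ix (proj1 (hadd_rev R _ _ _ Hz))).
Qed.

Lemma hyperideal_cancel_hmull (c x x0 z : R) :
  hadd x x0 z -> I (hmul c z) -> I (hmul c x0) -> I (hmul c x).
Proof.
  intros Hz Iz Ix0. apply (hyperideal_hsub (hmul c z) (hmul c x0)); [exact Iz | exact Ix0 |].
  exact (proj2 (hadd_rev R _ _ _ (hadd_hmull c _ _ _ Hz))).
Qed.

Lemma hyperideal_cancel_hmulr (c x x0 z : R) :
  hadd x x0 z -> I (hmul z c) -> I (hmul x0 c) -> I (hmul x c).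
Proof. rewrite !(hmul_comm R _ c). apply hyperideal_cancel_hmull. Qed.

End HyperidealClosure.

Definition hprincipal (b : R) : hset R := fun x => exists r, x = hmul r b.

Lemma hprincipal_self (b : R) : hprincipal b b.
Proof. exists hone. symmetry. apply hmul_one. Qed.

Lemma hprincipal_hyperideal (b : R) : hyperideal (hprincipal b).
Proof.
  split; [exists b; apply hprincipal_self |]. split.
  - intros x y z [r ->] [s ->] Hz.
    rewrite (hmul_comm R s b), <- hmul_hneg, (hmul_comm R r b) in Hz.
    destruct (proj2 (hmul_distr R b r (hneg s) z) Hz) as [t [_ ->]].
    exists t. apply hmul_comm.
  - intros r x [s ->]. exists (hmul r s). apply hmul_assoc.
Qed.

Lemma hcolon_hyperideal (I : hset R) (a : R) : hyperideal I -> hyperideal (hcolon I a).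
Proof.
  intro HI. unfold hcolon. split; [| split].
  - exists hzero. rewrite hmul_comm, hmul_zero. apply hyperideal_hzero, HI.
  - intros x y z Ix Iy Hz. apply (hyperideal_hsub I HI (hmul x a) (hmul y a)); auto.
    rewrite <- (hmul_comm R a y), <- hmul_hneg, (hmul_comm R a).
    apply hadd_hmulr, Hz.
  - intros r x Ix. rewrite <- hmul_assoc. apply hyperideal_hmull; auto.
Qed.

Lemma hcolonI_hyperideal (I M : hset R) : hyperideal I -> hyperideal (hcolonI I M).
Proof.
  intro HI. split; [| split].
  - exists hzero. intros m _. apply hyperideal_hzero, hcolon_hyperideal, HI.
  - intros x y z Ix Iy Hz m Mm.
    exact (hyperideal_hsub _ (hcolon_hyperideal I m HI) x y z (Ix m Mm) (Iy m Mm) Hz).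
  - intros r x Ix m Mm. exact (hyperideal_hmull _ (hcolon_hyperideal I m HI) r x (Ix m Mm)).
Qed.

Lemma hcolonI_hprincipal (I : hset R) (a : R) :
  (forall r x, I x -> I (hmul r x)) -> hseteq (hcolonI I (hprincipal a)) (hcolon I a).
Proof.
  intros HI x. split.
  - intro Ix. apply Ix, hprincipal_self.
  - intros Ix m [r ->]. rewrite hmulCA. apply HI, Ix.
Qed.

Lemma hprod_hmul (K L : hset R) (k l : R) : K k -> L l -> hprod K L (hmul k l).
Proof. intros Kk Ll I _ HI. apply HI; auto. Qed.

Lemma hprod_sub (K L I : hset R) :
  hyperideal I -> (forall k l, K k -> L l -> I (hmul k l)) -> hsubset (hprod K L) I.
Proof. intros HI HKL x Hx. apply Hx; auto. Qed.

Section PrimaryProducts.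
Variables N P D K L : hset R.
Hypotheses (HN : hyperideal N) (HD : hyperideal D) (HK : hyperideal K) (HL : hyperideal L).
Hypothesis HP : hyperideal P \/ hempty P.
Hypothesis Hprimary : forall a b, N (hmul a b) -> ~ P (hmul a b) -> N a \/ D b.
Hypothesis HKL : forall k l, K k -> L l -> N (hmul k l).

Lemma primary_mem_notin (k l : R) : K k -> ~ N k -> L l -> ~ D l -> P (hmul k l).
Proof.
  intros Kk Nk Ll Dl. apply NNPP. intro Pkl.
  destruct (Hprimary k l (HKL k l Kk Ll) Pkl); tauto.
Qed.

Lemma primary_mem_notinD (k0 l : R) : K k0 -> ~ N k0 -> L l -> ~ D l ->
  hyperideal P -> forall k, K k -> P (hmul k l).
Proof.
  intros Kk0 Nk0 Ll Dl HPI k Kk.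
  destruct (classic (N k)) as [Nk | Nk]; [| apply primary_mem_notin; auto].
  destruct (hadd_nonempty R k k0) as [z Hz].
  apply (hyperideal_cancel_hmulr P HPI l k k0 z Hz); apply primary_mem_notin; auto.
  - apply (hyperideal_hadd K HK k k0); auto.
  - apply (hyperideal_hadd_notin N HN k k0); auto.
Qed.

Lemma primary_hprod_mem :
  ~ hsubset K N -> ~ hsubset L D -> forall k l, K k -> L l -> P (hmul k l).
Proof.
  intros HKN HLD k l Kk Ll.
  destruct (not_hsubset_ex R K N HKN) as [k0 [Kk0 Nk0]].
  destruct (not_hsubset_ex R L D HLD) as [l0 [Ll0 Dl0]].
  assert (HPI : hyperideal P).
  { destruct HP as [HPI | HP0]; [exact HPI |].
    destruct (HP0 _ (primary_mem_notin k0 l0 Kk0 Nk0 Ll0 Dl0)). }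
  destruct (classic (D l)) as [Dl | Dl]; [| apply primary_mem_notinD with k0; auto].
  destruct (hadd_nonempty R l l0) as [y Hy].
  apply (hyperideal_cancel_hmull P HPI k l l0 y Hy);
    apply primary_mem_notinD with k0; auto.
  - apply (hyperideal_hadd L HL l l0); auto.
  - apply (hyperideal_hadd_notin D HD l l0); auto.
Qed.

End PrimaryProducts.
End HyperringFacts.

Section Characterization.
Variable R : KHyperring.
Variables (phi delta : hset R -> hset R) (N : hset R).
Hypotheses (Hphi : hreduction phi) (Hdelta : hexpansion delta).
Hypotheses (HN : hyperideal N) (HNp : proper N).

Let phi_sub : hsubset (phi N) N := proj1 (proj2 Hphi) N HN.
Let phi_cases : hyperideal (phi N) \/ hempty (phi N) := proj1 Hphi N HN.
Let delta_hyperideal : hyperideal (delta N) := proj1 Hdelta N HN.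

Let phi_hmull (r x : R) : phi N x -> phi N (hmul r x).
Proof.
  intro Px. destruct phi_cases as [HP | HP0].
  - apply hyperideal_hmull; auto.
  - destruct (HP0 x Px).
Qed.

Lemma primary_hcolon_union : phi_delta_primary phi delta N ->
  forall a, ~ delta N a -> hseteq (hcolon N a) (fun x => N x \/ hcolon (phi N) a x).
Proof.
  intros [_ [_ Hi]] a Da x. unfold hcolon. split.
  - intro Nxa. destruct (classic (phi N (hmul x a))) as [Pxa | Pxa]; [auto |].
    destruct (Hi x a Nxa Pxa) as [Nx | Da_in]; [auto | contradiction].
  - intros [Nx | Pxa]; [apply hyperideal_hmulr | apply phi_sub]; auto.
Qed.

Lemma hcolon_union_primary :
  (forall a, ~ delta N a -> hseteq (hcolon N a) (fun x => N x \/ hcolon (phi N) a x)) ->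
  phi_delta_primary phi delta N.
Proof.
  intro Hii. split; [exact HN | split; [exact HNp |]]. intros a b Nab Pab.
  destruct (classic (delta N b)) as [Db | Db]; [auto |].
  destruct (proj1 (Hii b Db a) Nab) as [Na | Pab_in]; [left; exact Na | contradiction].
Qed.

Lemma hcolon_cases_primary :
  (forall a, ~ delta N a ->
     hseteq (hcolon N a) N \/ hseteq (hcolon N a) (hcolon (phi N) a)) ->
  phi_delta_primary phi delta N.
Proof.
  intro Hiii. split; [exact HN | split; [exact HNp |]]. intros a b Nab Pab.
  destruct (classic (delta N b)) as [Db | Db]; [auto |].
  destruct (Hiii b Db) as [E | E].
  - left. exact (proj1 (E a) Nab).
  - destruct (Pab (proj1 (E a) Nab)).
Qed.

Lemma primary_hprod_cases : phi_delta_primary phi delta N ->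
  forall K L, hyperideal K -> hyperideal L ->
    hsubset (hprod K L) N -> ~ hsubset (hprod K L) (phi N) ->
    hsubset K N \/ hsubset L (delta N).
Proof.
  intros [_ [_ Hi]] K L HK HL HKLN HKLP.
  destruct (classic (hsubset K N)) as [KN | KN]; [auto |].
  destruct (classic (hsubset L (delta N))) as [LD | LD]; [auto |].
  assert (Hgen := primary_hprod_mem R N (phi N) (delta N) K L HN delta_hyperideal HK HL
    phi_cases Hi (fun k l Kk Ll => HKLN _ (hprod_hmul R K L k l Kk Ll)) KN LD).
  destruct (not_hsubset_ex R K N KN) as [k0 [Kk0 _]].
  destruct (not_hsubset_ex R L (delta N) LD) as [l0 [Ll0 _]].
  destruct phi_cases as [HP | HP0]; [| destruct (HP0 _ (Hgen k0 l0 Kk0 Ll0))].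
  destruct HKLP. apply hprod_sub; auto.
Qed.

Lemma hprod_cases_primary :
  (forall K L, hyperideal K -> hyperideal L ->
    hsubset (hprod K L) N -> ~ hsubset (hprod K L) (phi N) ->
    hsubset K N \/ hsubset L (delta N)) ->
  phi_delta_primary phi delta N.
Proof.
  intro Hiv. split; [exact HN | split; [exact HNp |]]. intros a b Nab Pab.
  destruct (Hiv (hprincipal R a) (hprincipal R b)) as [KN | LD].
  - apply hprincipal_hyperideal.
  - apply hprincipal_hyperideal.
  - apply hprod_sub; [exact HN |]. intros k l [r ->] [s ->].
    rewrite <- hmul_assoc, (hmulCA R a s b).
    apply hyperideal_hmull, hyperideal_hmull; auto.
  - intro HP. apply Pab, HP, hprod_hmul; apply hprincipal_self.
  - left. apply KN, hprincipal_self.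
  - right. apply LD, hprincipal_self.
Qed.

Lemma primary_hcolonI_cases : phi_delta_primary phi delta N ->
  forall M, hyperideal M -> ~ hsubset M (delta N) ->
    hseteq (hcolonI N M) N \/ hseteq (hcolonI N M) (hcolonI (phi N) M).
Proof.
  intros [_ [_ Hi]] M HM MD.
  destruct (classic (hsubset (hcolonI N M) N)) as [CN | CN].
  - left. intro x. split; [apply CN |]. intros Nx m _. apply hyperideal_hmulr; auto.
  - right. intro x. split.
    + intros Cx m Mm.
      apply (primary_hprod_mem R N (phi N) (delta N) (hcolonI N M) M HN delta_hyperideal
        (hcolonI_hyperideal R N M HN) HM phi_cases Hi (fun k l Ck Ml => Ck l Ml) CN MD);
        auto.
    + intros Px m Mm. apply phi_sub, Px, Mm.
Qed.

Lemma hcolonI_cases_hcolon_cases :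
  (forall M, hyperideal M -> ~ hsubset M (delta N) ->
    hseteq (hcolonI N M) N \/ hseteq (hcolonI N M) (hcolonI (phi N) M)) ->
  forall a, ~ delta N a ->
    hseteq (hcolon N a) N \/ hseteq (hcolon N a) (hcolon (phi N) a).
Proof.
  intros Hv a Da.
  assert (HaD : ~ hsubset (hprincipal R a) (delta N))
    by (intro HaD; apply Da, HaD, hprincipal_self).
  pose proof (hcolonI_hprincipal R N a (hyperideal_hmull R N HN)) as EN.
  pose proof (hcolonI_hprincipal R (phi N) a phi_hmull) as EP.
  destruct (Hv _ (hprincipal_hyperideal R a) HaD) as [E | E]; [left | right];
    intro x; rewrite <- (EN x), (E x); [reflexivity | apply EP].
Qed.

End Characterization.

Theorem mainTheorem3 (R : KHyperring) (phi delta : hset R -> hset R) (N : hset R)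
  (Hphi : hreduction phi) (Hdelta : hexpansion delta)
  (HN : hyperideal N) (HNp : proper N) :
  let i := phi_delta_primary phi delta N in
  let ii := forall a : R, ~ delta N a ->
              hseteq (hcolon N a) (fun x => N x \/ hcolon (phi N) a x) in
  let iii := forall a : R, ~ delta N a ->
              hseteq (hcolon N a) N \/ hseteq (hcolon N a) (hcolon (phi N) a) in
  let iv := forall K L : hset R, hyperideal K -> hyperideal L ->
              hsubset (hprod K L) N -> ~ hsubset (hprod K L) (phi N) ->
              hsubset K N \/ hsubset L (delta N) in
  let v := forall M : hset R, hyperideal M -> ~ hsubset M (delta N) ->
              hseteq (hcolonI N M) N \/ hseteq (hcolonI N M) (hcolonI (phi N) M) in
  (i <-> ii) /\ (i <-> iii) /\ (i <-> iv) /\ (i <-> v).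
Proof.
  cbv zeta.
  pose proof (primary_hcolonI_cases R phi delta N Hphi Hdelta HN) as i_v.
  pose proof (hcolonI_cases_hcolon_cases R phi delta N Hphi HN) as v_iii.
  pose proof (hcolon_cases_primary R phi delta N HN HNp) as iii_i.
  split; [split | split; [split | split; split]].
  - exact (primary_hcolon_union R phi delta N Hphi HN).
  - exact (hcolon_union_primary R phi delta N HN HNp).
  - intro Hi. apply v_iii, i_v, Hi.
  - exact iii_i.
  - exact (primary_hprod_cases R phi delta N Hphi Hdelta HN).
  - exact (hprod_cases_primary R phi delta N HN HNp).
  - exact i_v.
  - intro Hv. apply iii_i, v_iii, Hv.
Qed.
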